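(* Suppose $\xi$ is an $\mathcal{S}$-shrinking point of the map $f$, where $\mathcal{S}=\mathcal{F}[\ell,m,n]$, and let $\{y_i\}$ be the $\mathcal{S}^{\overline0}$-cycle. Then (i) $\{y_i\}$ is both an $\mathcal{S}$-cycle and an $\mathcal{S}^{(-d)}$-cycle; (ii) $I-M_{\mathcal{S}}$ is singular; (iii) $P_{\mathcal{S}^{(i)}}$ is singular for all $i$.
   Context: Fix $N\ge2$. For $\mu\in\mathbb{R}$ and a parameter $\xi$, let $f:\mathbb{R}^N\to\mathbb{R}^N$, $f(x)=A_Lx+B\mu$ if $e_1^{\mathsf T}x\le0$, $f(x)=A_Rx+B\mu$ if $e_1^{\mathsf T}x\ge0$, with $A_L,A_R$ real $N\times N$ matrices, $B\in\mathbb{R}^N$ (depending on $\xi$), and $A_R=A_L+Ce_1^{\mathsf T}$ for some $C\in\mathbb{R}^N$. $f^L(x)=A_Lx+B\mu$, $f^R(x)=A_Rx+B\mu$, $\varrho^{\mathsf T}=e_1^{\mathsf T}\mathrm{adj}(I-A_L)$. A periodic sequence $\mathcal{S}:\mathbb{Z}\to\{L,R\}$ of period $n$ is identified with $\mathcal{S}_0\cdots\mathcal{S}_{n-1}$; indices mod $n$; $\mathcal{S}^{(j)}_i=\mathcal{S}_{i+j}$; $\mathcal{S}^{\overline j}$ differs from $\mathcal{S}$ exactly at indices $\equiv j$. $M_{\mathcal{S}}=A_{\mathcal{S}_{n-1}}\cdots A_{\mathcal{S}_0}$, $P_{\mathcal{S}}=I+A_{\mathcal{S}_{n-1}}+A_{\mathcal{S}_{n-1}}A_{\mathcal{S}_{n-2}}+\cdots+A_{\mathcal{S}_{n-1}}\cdots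 A_{\mathcal{S}_1}$. An $\mathcal{S}$-cycle is $(x_0,\dots,x_{n-1})$ with $x_{(i+1)\bmod n}=f^{\mathcal{S}_i}(x_i)$ for all $i$ (indices of the cycle mod $n$); it is admissible if $e_1^{\mathsf T}x_i\le0$ whenever $\mathcal{S}_i=L$ and $\ge0$ whenever $\mathcal{S}_i=R$. For positive integers $\ell<n$, $m<n$, $\gcd(m,n)=1$: $\mathcal{F}[\ell,m,n]_i=L$ if $im\bmod n<\ell$, $R$ otherwise; $d$ is the inverse of $m$ mod $n$. Definition: with $\mu\ne0$, $\varrho^{\mathsf T}B\ne0$, $\mathcal{S}=\mathcal{F}[\ell,m,n]$, $2\le\ell\le n-2$, $\xi$ is an $\mathcal{S}$-shrinking point if $\det(I-M_{\mathcal{S}^{\overline0}})\ne0$, $\det(I-M_{\mathcal{S}^{\overline{\ell d}}})\ne0$, the (unique) $\mathcal{S}^{\overline0}$-cycle is admissible, and its first coordinates $e_1^{\mathsf T}x_i$ vanish exactly for $i\equiv0$ and $i\equiv\ell d\pmod n$. *)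

From mathcomp Require Import all_boot all_order all_algebra.
Set Implicit Arguments. Unset Strict Implicit. Unset Printing Implicit Defensive.
Import Order.TTheory GRing.Theory Num.Theory.
Local Open Scope ring_scope.

Inductive LR := Lft | Rgt.

Definition flipLR (s : LR) : LR := match s with Lft => Rgt | Rgt => Lft end.

Definition e1 (R : pzRingType) (N : nat) : 'cV[R]_N :=
  \col_(i < N) (if val i == 0%N then 1 else 0).

Definition fstc (R : pzRingType) (N : nat) (x : 'cV[R]_N) : R :=
  ((e1 R N)^T *m x) ord0 ord0.

Definition Aof (R : pzRingType) (N : nat) (AL AR : 'M[R]_N) (s : LR) : 'M[R]_N :=
  match s with Lft => AL | Rgt => AR end.

(* Periodic sequences S : Z -> {L,R} of period n are represented by functions
   nat -> LR that are read modulo n (only S 0, ..., S (n-1) matter, or they are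
   periodic by construction). *)

Definition seqF (l m n : nat) : nat -> LR :=
  fun i => if ((i * m) %% n < l)%N then Lft else Rgt.

Definition shiftS (S : nat -> LR) (j : nat) : nat -> LR := fun i => S (i + j)%N.

Definition barS (n : nat) (S : nat -> LR) (j : nat) : nat -> LR :=
  fun i => if (i %% n == j %% n)%N then flipLR (S i) else S i.

Fixpoint Mpref (R : pzRingType) (N : nat) (AL AR : 'M[R]_N) (S : nat -> LR) (k : nat)
  : 'M[R]_N :=
  match k with
  | 0 => 1%:M
  | k'.+1 => Aof AL AR (S k') *m Mpref AL AR S k'
  end.

Definition Mseq (R : pzRingType) (N : nat) (AL AR : 'M[R]_N) (n : nat) (S : nat -> LR)
  : 'M[R]_N := Mpref AL AR S n.

Fixpoint Msuf (R : pzRingType) (N : nat) (AL AR : 'M[R]_N) (n : nat) (S : nat -> LR)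
  (k : nat) : 'M[R]_N :=
  match k with
  | 0 => 1%:M
  | k'.+1 => Msuf AL AR n S k' *m Aof AL AR (S (n - k'.+1)%N)
  end.

Definition Pseq (R : pzRingType) (N : nat) (AL AR : 'M[R]_N) (n : nat) (S : nat -> LR)
  : 'M[R]_N := \sum_(k < n) Msuf AL AR n S k.

Definition is_cycle (R : pzRingType) (N : nat) (AL AR : 'M[R]_N) (B : 'cV[R]_N) (mu : R)
  (n : nat) (S : nat -> LR) (x : nat -> 'cV[R]_N) : Prop :=
  forall i, (i < n)%N -> x ((i.+1) %% n)%N = Aof AL AR (S i) *m x i + mu *: B.

Definition admissible (R : realFieldType) (N : nat) (n : nat) (S : nat -> LR)
  (x : nat -> 'cV[R]_N) : Prop :=
  forall i, (i < n)%N ->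
    (S i = Lft -> fstc (x i) <= 0) /\ (S i = Rgt -> 0 <= fstc (x i)).

Definition rhoTB (R : comPzRingType) (N : nat) (AL : 'M[R]_N) (B : 'cV[R]_N) : R :=
  ((e1 R N)^T *m \adj (1%:M - AL) *m B) ord0 ord0.

(* xi is an S-shrinking point, S = F[l,m,n], d the inverse of m mod n *)
Definition shrinking_point (R : realFieldType) (N : nat) (AL AR : 'M[R]_N)
  (B : 'cV[R]_N) (mu : R) (l m n d : nat) : Prop :=
  let S := seqF l m n in
  [/\ mu != 0, rhoTB AL B != 0, (2 <= l <= n - 2)%N,
      \det (1%:M - Mseq AL AR n (barS n S 0)) != 0
        /\ \det (1%:M - Mseq AL AR n (barS n S (l * d)%N)) != 0 &
      forall x, is_cycle AL AR B mu n (barS n S 0) x ->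
        admissible n (barS n S 0) x /\
        (forall i, (i < n)%N ->
           (fstc (x i) = 0 <-> (i %% n = 0 \/ i %% n = (l * d) %% n)%N))].

From mathcomp Require Import all_boot all_order all_algebra zify.
Set Implicit Arguments. Unset Strict Implicit. Unset Printing Implicit Defensive.
Import Order.TTheory GRing.Theory Num.Theory.
Local Open Scope ring_scope.

(* On the switching manifold [e_1^T x = 0] the two pieces of [f] agree, so a
   cycle may be relabelled at its points with vanishing first coordinate. The
   [S^{bar 0}]-cycle [y] meets the manifold at [i = 0] and [i = l d], which are
   exactly the indices where [S^{bar 0}] differs from [S] and from [S^(-d)];
   hence [y] is an [S]-cycle and an [S^(-d)]-cycle. If [I - M_{S^(j)}] were
   nonsingular, the [S^(j)]-cycle would be unique, but the rotations of [y] by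
   [j] and by [j + d] are two such cycles, and [y_0 <> y_d]. Finally
   [P_S (I - A_L)] agrees with [I - M_S] off the first column, so
   [rho^T adj P_S] is the first row of [adj (I - M_S)], a left null vector of
   [I - M_S]; applied to [(I - M_S) y_0 = mu P_S B] it gives
   [mu det (P_S) rho^T B = 0]. *)


Section Products.

Variables (R : comPzRingType) (N : nat) (AL AR : 'M[R]_N).
Implicit Types (U : nat -> LR) (k : nat).

Lemma Mpref_eq U U' k :
  (forall i, (i < k)%N -> U i = U' i) -> Mpref AL AR U k = Mpref AL AR U' k.
Proof.
elim: k => [|k IH] hU //=.
by rewrite hU // IH // => i hi; apply/hU/ltnW.
Qed.

Lemma Msuf_S U k j :
  (j <= k)%N -> Msuf AL AR k.+1 U j.+1 = Aof AL AR (U k) *m Msuf AL AR k U j.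
Proof.
elim: j => [|j IH] hj; first by rewrite /= mul1mx mulmx1 subSS subn0.
change (Msuf AL AR k.+1 U j.+1 *m Aof AL AR (U (k.+1 - j.+2)%N)
  = Aof AL AR (U k) *m Msuf AL AR k U j.+1).
by rewrite IH 1?ltnW // -mulmxA subSS.
Qed.

Lemma PseqS U k : Pseq AL AR k.+1 U = Aof AL AR (U k) *m Pseq AL AR k U + 1%:M.
Proof.
rewrite /Pseq big_ord_recl mulmx_sumr addrC; congr (_ + _).
by apply: eq_bigr => j _; rewrite lift0 Msuf_S // ltnW.
Qed.

Lemma Pseq_mul_subAL (C : 'cV[R]_N) U k : AR = AL + C *m (e1 R N)^T ->
  exists W : 'cV[R]_N,
    Pseq AL AR k U *m (1%:M - AL) = 1%:M - Mseq AL AR k U + W *m (e1 R N)^T.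
Proof.
move=> hAR; elim: k => [|k [W IH]].
  by exists 0; rewrite /Pseq big_ord0 mul0mx /Mseq /= subrr mul0mx addr0.
have [V hV] : exists V : 'cV[R]_N, Aof AL AR (U k) = AL + V *m (e1 R N)^T.
  by case: (U k); [exists 0; rewrite mul0mx addr0 | exists C].
exists (Aof AL AR (U k) *m W + V).
rewrite PseqS mulmxDl -mulmxA IH mul1mx /Mseq /= mulmxDr mulmxBr mulmx1.
rewrite {1}hV mulmxDl -mulmxA.
set AM := _ *m Mpref _ _ _ _; set AWe := _ *m (W *m _); set Ve := V *m _.
by rewrite addrC !addrA subrK (addrAC _ Ve) (addrAC _ Ve).
Qed.

End Products.

Definition periodic_mod (n : nat) (U : nat -> LR) : Prop :=
  forall a b, (a %% n = b %% n)%N -> U a = U b.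

Section Cycles.

Variables (R : comPzRingType) (N : nat) (AL AR : 'M[R]_N) (B : 'cV[R]_N) (n : nat).
Implicit Types (U : nat -> LR) (x : nat -> 'cV[R]_N) (mu : R).

Lemma cycle_iterate mu U x k : is_cycle AL AR B mu n U x -> (k <= n)%N ->
  x (k %% n)%N = Mseq AL AR k U *m x 0%N + mu *: (Pseq AL AR k U *m B).
Proof.
move=> hx; elim: k => [|k IH] hk.
  by rewrite mod0n /Pseq big_ord0 mul1mx mul0mx scaler0 addr0.
rewrite hx // -[x k](congr1 x (modn_small hk)) IH 1?ltnW // PseqS /Mseq /=.
by rewrite mulmxDr -scalemxAr !mulmxA mulmxDl mul1mx scalerDr addrA.
Qed.

Lemma cycle_fixed_point mu U x : is_cycle AL AR B mu n U x ->
  (1%:M - Mseq AL AR n U) *m x 0%N = mu *: (Pseq AL AR n U *m B).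
Proof.
move=> hx; have := cycle_iterate hx (leqnn n); rewrite modnn => ex0.
by rewrite mulmxBl mul1mx {1}ex0 addrAC subrr add0r.
Qed.

Lemma is_cycle_sub mu U x x' :
  is_cycle AL AR B mu n U x -> is_cycle AL AR B mu n U x' ->
  is_cycle AL AR B 0 n U (fun k => x k - x' k).
Proof.
move=> hx hx' i hi; rewrite hx // hx' // mulmxBr scale0r addr0.
by rewrite opprD addrACA subrr addr0.
Qed.

Lemma is_cycle_eq mu U U' x : (forall i, (i < n)%N -> U i = U' i) ->
  is_cycle AL AR B mu n U x -> is_cycle AL AR B mu n U' x.
Proof. by move=> hU hx i hi; rewrite hx // hU. Qed.

Lemma shift_cycle mu U x s : periodic_mod n U -> is_cycle AL AR B mu n U x ->
  is_cycle AL AR B mu n (shiftS U s) (fun k => x ((k + s) %% n)%N).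
Proof.
move=> hU hx k hk; have n0 : (0 < n)%N by apply: leq_ltn_trans hk.
rewrite modnDml addSn -(addn1 (k + s)) -modnDml addn1 hx ?ltn_pmod //.
by rewrite (hU _ (k + s)%N) // modn_mod.
Qed.

Variable C : 'cV[R]_N.
Hypothesis hAR : AR = AL + C *m (e1 R N)^T.

Lemma Aof_switching s (z : 'cV[R]_N) : fstc z = 0 -> Aof AL AR s *m z = AL *m z.
Proof.
move=> z0; have e1z : (e1 R N)^T *m z = 0.
  by apply/matrixP => i j; rewrite (ord1 i) (ord1 j) [RHS]mxE.
by case: s => //=; rewrite hAR mulmxDl -mulmxA e1z mulmx0 addr0.
Qed.

Lemma is_cycle_switching mu U U' x :
  (forall i, (i < n)%N -> U i = U' i \/ fstc (x i) = 0) ->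
  is_cycle AL AR B mu n U x -> is_cycle AL AR B mu n U' x.
Proof.
move=> hU hx i hi; rewrite hx //.
by have [->|x0] := hU i hi; rewrite // !Aof_switching.
Qed.

End Cycles.

Lemma cycle_unique (R : comUnitRingType) N (AL AR : 'M[R]_N) B mu n U x x' :
  \det (1%:M - Mseq AL AR n U) \is a GRing.unit ->
  is_cycle AL AR B mu n U x -> is_cycle AL AR B mu n U x' ->
  forall k, (k < n)%N -> x k = x' k.
Proof.
move=> hdet hx hx' k hk; apply/eqP; rewrite -subr_eq0; apply/eqP.
have hu := is_cycle_sub hx hx'.
have u0 : x 0%N - x' 0%N = 0.
  have hU : 1%:M - Mseq AL AR n U \in unitmx by rewrite unitmxE.
  have := cycle_fixed_point hu; rewrite scale0r => e0.
  by rewrite -(mulKmx hU (_ - _)) e0 mulmx0.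
by have := cycle_iterate hu (ltnW hk); rewrite modn_small // u0 mulmx0 scale0r addr0.
Qed.

Lemma scale_det_adj_mulmx (R : comPzRingType) n (A B : 'M[R]_n) :
  \det (A *m B) *: (\adj (A *m B) - \adj B *m \adj A) = 0.
Proof.
set D := _ - _.
have DAB : D *m (A *m B) = 0.
  rewrite /D mulmxBl mul_adj_mx -mulmxA (mulmxA (\adj A)) mul_adj_mx.
  by rewrite mul_scalar_mx -scalemxAr mul_adj_mx det_mulmx scalar_mxM mul_scalar_mx subrr.
by rewrite -mul_mx_scalar -mul_mx_adj mulmxA DAB mul0mx.
Qed.

(* Over [{poly R}] the matrices ['X + A] and ['X + B] have monic, hence
   nonzero, determinants; evaluating at ['X = 0] transfers the identity. *)
Lemma adj_mulmx (R : idomainType) n (A B : 'M[R]_n) :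
  \adj (A *m B) = \adj B *m \adj A.
Proof.
pose f := horner_eval (0 : R).
have evalX (X : 'M[R]_n) : map_mx f (char_poly_mx (- X)) = X.
  apply/matrixP => i j; rewrite !mxE /f horner_evalE !hornerE /=.
  by rewrite hornerMn hornerX mul0rn sub0r opprK.
set At := char_poly_mx (- A); set Bt := char_poly_mx (- B).
have detAB : \det (At *m Bt) != 0.
  by rewrite det_mulmx mulf_neq0 // monic_neq0 // char_poly_monic.
have /eqP := scale_det_adj_mulmx At Bt.
rewrite scalemx_eq0 (negPf detAB) /= subr_eq0 => /eqP/(congr1 (map_mx f)).
by rewrite map_mxM !map_mx_adj map_mxM !evalX.
Qed.

(* The first row of [\adj K] consists of cofactors along column [0], which do
   not involve that column. *)
Lemma e1T_adj_eq (R : comPzRingType) N (K K' : 'M[R]_N) :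
  (forall i j : 'I_N, val j != 0%N -> K i j = K' i j) ->
  (e1 R N)^T *m \adj K = (e1 R N)^T *m \adj K'.
Proof.
move=> hKK'; apply/matrixP => a b; rewrite !mxE; apply: eq_bigr => k _.
rewrite !mxE; have [k0|] := eqVneq (val k) 0%N; last by rewrite !mul0r.
congr (_ * _); rewrite /cofactor; congr (_ * \det _).
by apply/matrixP => p q; rewrite !mxE hKK' //= /bump k0.
Qed.

Lemma det_Pseq_eq0 (R : idomainType) N (AL AR : 'M[R]_N) (B C : 'cV[R]_N) (mu : R) n U x :
  AR = AL + C *m (e1 R N)^T -> mu != 0 -> rhoTB AL B != 0 ->
  \det (1%:M - Mseq AL AR n U) = 0 -> is_cycle AL AR B mu n U x ->
  \det (Pseq AL AR n U) = 0.
Proof.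
move=> hAR mu0 rho0 hdet hx.
set X := 1%:M - Mseq AL AR n U; set P := Pseq AL AR n U.
have [W hW] := Pseq_mul_subAL U n hAR.
have rowX : (e1 R N)^T *m \adj X = (e1 R N)^T *m \adj (1%:M - AL) *m \adj P.
  rewrite -mulmxA -adj_mulmx; apply: e1T_adj_eq => i j j0.
  by rewrite hW [RHS]mxE [X in _ + X]mxE big_ord1 !mxE (negPf j0) mulr0 addr0.
have /(congr1 (mulmx^~ (x 0%N))) : (e1 R N)^T *m \adj X *m X = 0.
  by rewrite -mulmxA mul_adj_mx hdet mul_mx_scalar scale0r.
rewrite mul0mx -mulmxA (cycle_fixed_point hx) -scalemxAr rowX.
rewrite !mulmxA -(mulmxA _ (\adj P)) mul_adj_mx mul_mx_scalar -scalemxAl.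
move=> /matrixP /(_ ord0 ord0); rewrite !mxE => /eqP.
rewrite mulf_eq0 (negPf mu0) /= mulf_eq0 => /orP [/eqP //|rho].
by move: rho0; rewrite /rhoTB mxE rho.
Qed.

Lemma det_sub_Mseq_shift_eq0 (R : fieldType) N (AL AR : 'M[R]_N) (B : 'cV[R]_N) (mu : R)
  n U d (y : nat -> 'cV[R]_N) :
  periodic_mod n U -> (d < n)%N -> y 0%N != y d ->
  is_cycle AL AR B mu n U y -> is_cycle AL AR B mu n (shiftS U (n - d)) y ->
  forall j, \det (1%:M - Mseq AL AR n (shiftS U j)) = 0.
Proof.
move=> hU hd y0d hy hyd j; apply/eqP; apply: contraT => hdet.
have hUd : periodic_mod n (shiftS U (n - d)).
  by move=> a b e; apply: hU; rewrite -modnDml e modnDml.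
have hyj := shift_cycle j hU hy.
have hyjd : is_cycle AL AR B mu n (shiftS U j) (fun k => y ((k + (j + d)) %% n)%N).
  apply: is_cycle_eq (shift_cycle (j + d) hUd hyd) => i _; apply: hU.
  by rewrite (_ : i + (j + d) + (n - d) = i + j + n)%N ?modnDr //; lia.
set k0 := ((n - j %% n) %% n)%N.
have n0 : (0 < n)%N by apply: leq_ltn_trans hd.
have hk0 : (k0 < n)%N by rewrite ltn_pmod.
have ek0 : ((k0 + j) %% n = 0)%N.
  by rewrite /k0 modnDml -modnDmr subnK ?modnn // ltnW // ltn_pmod.
have := cycle_unique (R := R) _ hyj hyjd hk0.
rewrite unitfE hdet /= ek0 addnA -modnDml ek0 add0n modn_small // => /(_ isT) y0d'.
by rewrite y0d' eqxx in y0d.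
Qed.

Lemma seqF_periodic l m n : periodic_mod n (seqF l m n).
Proof. by move=> a b e; rewrite /seqF -modnMml e modnMml. Qed.

Lemma modn_mul_inv n m d i : ((m * d) %% n = 1 %% n)%N ->
  (i %% n = ((i * m) %% n * d) %% n)%N.
Proof. by move=> hmd; rewrite modnMml -mulnA -modnMmr hmd modnMmr muln1. Qed.

Lemma modn_mul_shift_inv n m d i : (d < n)%N -> ((m * d) %% n = 1 %% n)%N ->
  ((((i + (n - d)) * m) %% n).+1 %% n = (i * m) %% n)%N.
Proof.
move=> hd hmd.
have e : ((i + (n - d)) * m + m * d = m * n + i * m)%N.
  by rewrite mulnDl -addnA [(m * d)%N]mulnC -mulnDl subnK 1?ltnW // addnC mulnC.
transitivity ((((i + (n - d)) * m) %% n + m * d) %% n)%N.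
  by rewrite -modnDmr hmd modnDmr addn1.
by rewrite modnDml e modnMDl.
Qed.

(* [seqF l m n] walks through the residues [i * m mod n]; shifting by [-d]
   lowers the residue by one, so it changes the symbol exactly where the
   residue is [0] or [l]. *)
Lemma barS_seqF_shift l m n d i : (0 < l < n)%N -> (d < n)%N ->
  ((m * d) %% n = 1 %% n)%N -> (i < n)%N ->
  barS n (seqF l m n) 0 i = seqF l m n (i + (n - d)) \/ i = ((l * d) %% n)%N.
Proof.
move=> /andP[l0 ln] hd hmd hi.
have n0 : (0 < n)%N by apply: leq_ltn_trans hd.
have ha := modn_mul_inv i hmd; rewrite modn_small // in ha.
have hb := modn_mul_shift_inv i hd hmd.
rewrite /barS /seqF mod0n modn_small //.
set a := ((i * m) %% n)%N in ha hb *; set b := (((i + (n - d)) * m) %% n)%N in hb *.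
have bn : (b < n)%N by rewrite ltn_pmod.
have [bn1|bn1] := eqVneq b.+1 n.
  have a0 : a = 0%N by rewrite -hb bn1 modnn.
  have -> : i = 0%N by rewrite ha a0 mul0n mod0n.
  have -> : (b < l)%N = false by lia.
  by left; rewrite a0 l0.
have ab : a = b.+1 by rewrite -hb modn_small // ltn_neqAle bn1.
have [al|al] := eqVneq a l; first by right; rewrite {1}ha al.
have -> : (i == 0%N) = false by apply/eqP => i0; move: ab; rewrite /a i0 mul0n mod0n.
clearbody a b; have -> : (a < l)%N = (b < l)%N by lia.
by left.
Qed.

Section ShrinkingPoint.

Variables (R : realFieldType) (N : nat) (AL AR : 'M[R]_N) (B C : 'cV[R]_N) (mu : R).
Variables (l m n d : nat) (y : nat -> 'cV[R]_N).
Hypotheses (hAR : AR = AL + C *m (e1 R N)^T) (hl : (1 < l < n)%N) (hd : (d < n)%N).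
Hypothesis hmd : ((m * d) %% n = 1 %% n)%N.
Hypothesis hy : is_cycle AL AR B mu n (barS n (seqF l m n) 0) y.
Hypothesis hy_fst : forall i, (i < n)%N ->
  fstc (y i) = 0 <-> (i %% n = 0 \/ i %% n = (l * d) %% n)%N.

Let n0 : (0 < n)%N. Proof. exact: leq_ltn_trans hd. Qed.
Let n1 : (1 < n)%N. Proof. by case/andP: hl; apply: ltn_trans. Qed.

Lemma shrinking_cycle_seqF : is_cycle AL AR B mu n (seqF l m n) y.
Proof.
refine (is_cycle_switching hAR _ hy) => i hi.
have [->|i0] := eqVneq i 0%N; first by right; apply/(hy_fst n0); left; rewrite mod0n.
by left; rewrite /barS mod0n modn_small // (negPf i0).
Qed.

Lemma shrinking_cycle_shift : is_cycle AL AR B mu n (shiftS (seqF l m n) (n - d)) y.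
Proof.
refine (is_cycle_switching hAR _ hy) => i hi.
have hl0 : (0 < l < n)%N by case/andP: hl => /ltnW-> ->.
have [|->] := barS_seqF_shift hl0 hd hmd hi; first by left.
by right; apply/hy_fst; rewrite ?modn_mod ?ltn_pmod //; right.
Qed.

Lemma shrinking_cycle_neq : y 0%N != y d.
Proof.
apply/eqP => y0d.
have /(hy_fst hd) : fstc (y d) = 0.
  by rewrite -y0d; apply/(hy_fst n0); left; rewrite mod0n.
rewrite (modn_small hd).
case=> [d0|dl].
  by move: hmd; rewrite d0 muln0 mod0n modn_small.
have : ((m * d) %% n = l)%N.
  by rewrite {1}dl modnMmr mulnCA -modnMmr hmd modnMmr muln1 modn_small //; case/andP: hl.
by rewrite hmd modn_small // => l1; move: hl; rewrite -l1 ltnn.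
Qed.

End ShrinkingPoint.

Theorem proposition5p3 (R : realFieldType) (N : nat) (AL AR : 'M[R]_N)
  (B C : 'cV[R]_N) (mu : R) (l m n d : nat) (y : nat -> 'cV[R]_N) :
  (2 <= N)%N ->
  AR = AL + C *m (e1 R N)^T ->
  (0 < l < n)%N -> (0 < m < n)%N -> coprime m n ->
  (d < n)%N -> ((m * d) %% n = 1 %% n)%N ->
  shrinking_point AL AR B mu l m n d ->
  is_cycle AL AR B mu n (barS n (seqF l m n) 0) y ->
  [/\ is_cycle AL AR B mu n (seqF l m n) y
        /\ is_cycle AL AR B mu n (shiftS (seqF l m n) (n - d)) y,
      \det (1%:M - Mseq AL AR n (seqF l m n)) = 0 &
      forall i : nat, \det (Pseq AL AR n (shiftS (seqF l m n) i)) = 0].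
Proof.
move=> _ hAR _ _ _ hd hmd [mu0 rho0 /andP[l2 ln2] _ hcyc] hy.
have [_ hy_fst] := hcyc y hy.
have hl : (1 < l < n)%N by apply/andP; split; lia.
have hyS := shrinking_cycle_seqF hAR hd hy hy_fst.
have hyT := shrinking_cycle_shift hAR hl hd hmd hy hy_fst.
have perS : periodic_mod n (seqF l m n) by exact: seqF_periodic.
have hdet := det_sub_Mseq_shift_eq0 perS hd
  (shrinking_cycle_neq hl hd hmd hy_fst) hyS hyT.
split=> [//||i].
- rewrite -(hdet 0%N); congr (\det (_ - _)).
  by apply: Mpref_eq => i _; rewrite /shiftS addn0.
- exact: det_Pseq_eq0 hAR mu0 rho0 (hdet i) (shift_cycle i perS hyS).
Qed.
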